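(* Let $H=(E,\{X_i:i\in[n]\})$ be a hypergraph such that $|X_i\cap X_j|\le1$ for all distinct $i,j\in[n]$, and such that there are no $a,b,c\in E$ with $\{a,b\},\{a,c\},\{b,c\}$ all hyperedges. Let $\rho(A)=\sum_{i=1}^n\min\{|A\cap X_i|,1\}$ for $A\subseteq E$. Fix an integer $s$ with $\max\{\rho(A): A\subseteq E,\ |A|\le4\}\le s<\rho(E)$. If the truncation $T(\rho,s)$ is $k$-decomposable, then there is a proper $k$-coloring $c$ of the line graph $G_H$ with $s\ge c_1+2c_2^+$. If $s<\chi(G_H)$, then $T(\rho,s)$ is indecomposable.
   Context: A polymatroid on a finite set $E$ is a function $\rho:2^E\to\mathbb{Z}$ that is normalized, non-decreasing and submodular. A hypergraph is $H=(E,\mathcal{E})$ with $E$ finite and $\mathcal{E}=\{X_i:i\in[n]\}$ a set of nonempty subsets of $E$. The line graph $G_H$ has vertex set $[n]$ with $ij$ an edge iff $i\ne j$ and $X_i\cap X_j\ne\emptyset$. The truncation $T(\rho,s)$ is the polymatroid $X\mapsto\min\{\rho(X),s\}$. A polymatroid is $k$-decomposable if it equals $r_{M_1}+\cdots+r_{M_k}$ for matroids $M_1,\dots,M_k$ on its ground set, and indecomposable if it is not $k$-decomposable for any $k$. For a proper coloring $c:[n]\to[k]$, $c_1$ (resp. $c_2^+$) is the number of $i\in[k]$ with $|c^{-1}(i)|=1$ (resp. $\ge2$). *)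

From mathcomp Require Import all_boot all_order.
Set Implicit Arguments. Unset Strict Implicit. Unset Printing Implicit Defensive.

Section Defs.
Variable E : finType.

(* Polymatroid on E (nat-valued; the polymatroids in this statement are nonnegative). *)
Definition is_polymatroid (f : {set E} -> nat) : Prop :=
  [/\ f set0 = 0,
      (forall A B : {set E}, A \subset B -> f A <= f B) &
      (forall A B : {set E}, f (A :|: B) + f (A :&: B) <= f A + f B)].

Definition is_matroid_rank (r : {set E} -> nat) : Prop :=
  is_polymatroid r /\ (forall A : {set E}, r A <= #|A|).

Definition truncation (rho : {set E} -> nat) (s : nat) : {set E} -> nat :=
  fun X => minn (rho X) s.

Definition decomposable (f : {set E} -> nat) (k : nat) : Prop :=
  exists M : 'I_k -> {set E} -> nat,
    (forall i, is_matroid_rank (M i)) /\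
    (forall A : {set E}, f A = \sum_(i < k) M i A).

Definition indecomposable (f : {set E} -> nat) : Prop :=
  forall k, ~ decomposable f k.

Variable n : nat.
Variable X : 'I_n -> {set E}.

Definition hrho (A : {set E}) : nat := \sum_(i < n) minn #|A :&: X i| 1.

Definition line_adj (i j : 'I_n) : bool := (i != j) && (X i :&: X j != set0).

Definition proper_coloring (k : nat) (c : 'I_n -> 'I_k) : Prop :=
  forall i j, line_adj i j -> c i != c j.

Definition c1 (k : nat) (c : 'I_n -> 'I_k) : nat :=
  #|[set t : 'I_k | #|[set i | c i == t]| == 1]|.

Definition c2plus (k : nat) (c : 'I_n -> 'I_k) : nat :=
  #|[set t : 'I_k | 2 <= #|[set i | c i == t]|]|.

Definition colorable (k : nat) : bool :=
  [exists c : {ffun 'I_n -> 'I_k}, [forall i, forall j, line_adj i j ==> (c i != c j)]].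

(* chromatic number of the line graph (n colours always suffice) *)
Definition chi_line : nat := \big[minn/n]_(k < n.+1 | colorable k) k.

End Defs.

From mathcomp Require Import all_boot all_order.
From mathcomp Require Import zify.
Set Implicit Arguments. Unset Strict Implicit. Unset Printing Implicit Defensive.

(* Measure each matroid r_i of a decomposition by its defect
   d_i(A) = sum_(x in A) r_i {x} - r_i A, a monotone supermodular function.  Since the
   decomposition agrees with rho on sets of at most four points, the defects add up there to
   the excess sum_j (|A :&: X_j| - 1), so every hyperedge with two points lies in a parallel
   class of exactly one matroid.  Counting defects on four-point sets, together with
   triangle-freeness, shows that two meeting hyperedges never share that matroid, and a
   singleton {e} can be given a matroid in which e is not a loop and which no meeting
   hyperedge uses.  This colours the line graph properly; a colour class with two hyperedges
   gives its matroid two non-parallel points, hence rank at least 2, and a class with one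
   hyperedge rank at least 1, so c1 + 2 c2+ <= sum_i r_i(E) = s.  Finally, a proper colouring
   uses at least chi(G_H) colours. *)

Section MatroidDefect.
Variables (E : finType) (r : {set E} -> nat).
Hypothesis r_matroid : is_matroid_rank r.

Lemma rank0 : r set0 = 0.
Proof. by case: r_matroid => -[]. Qed.

Lemma rankS (A B : {set E}) : A \subset B -> r A <= r B.
Proof. by case: r_matroid => -[_ + _] _; apply. Qed.

Lemma rank_submod (A B : {set E}) : r (A :|: B) + r (A :&: B) <= r A + r B.
Proof. by case: r_matroid => -[]. Qed.

Lemma rank_le_card (A : {set E}) : r A <= #|A|.
Proof. by case: r_matroid. Qed.

Lemma rank1_le1 x : r [set x] <= 1.
Proof. by rewrite -(cards1 x) rank_le_card. Qed.

Lemma rankU_le (A B : {set E}) : r (A :|: B) <= r A + r B.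
Proof. by apply: leq_trans (rank_submod A B); apply: leq_addr. Qed.

Definition rank1_sum (A : {set E}) := \sum_(x in A) r [set x].

Lemma rank1_sumU1 x (A : {set E}) :
  x \notin A -> rank1_sum (x |: A) = r [set x] + rank1_sum A.
Proof. exact: big_setU1. Qed.

Lemma rank1_sumUI (A B : {set E}) :
  rank1_sum (A :|: B) + rank1_sum (A :&: B) = rank1_sum A + rank1_sum B.
Proof.
rewrite /rank1_sum (@big_setID _ _ _ _ (A :|: B) A) (@big_setID _ _ _ _ B A) /=.
by rewrite setUK setDUl setDv set0U [B :&: A]setIC; lia.
Qed.

Lemma rank1_sum_le_card (A : {set E}) : rank1_sum A <= #|A|.
Proof. by rewrite -sum1_card leq_sum // => x _; apply: rank1_le1. Qed.

Lemma rank_le_rank1_sum (A : {set E}) : r A <= rank1_sum A.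
Proof.
elim: {A}#|A| {-2}A (erefl #|A|) => [|m IH] A cardA.
  by move/eqP: cardA; rewrite cards_eq0 => /eqP ->; rewrite rank0.
have [x xA] : exists x, x \in A by apply/card_gt0P; rewrite cardA.
rewrite -(setD1K xA) rank1_sumU1 ?setD11 //.
apply: leq_trans (rankU_le _ _) _; rewrite leq_add2l IH //.
by move: cardA; rewrite (cardsD1 x) xA => -[].
Qed.

Definition defect (A : {set E}) := rank1_sum A - r A.

Lemma defect_rank (A : {set E}) : defect A + r A = rank1_sum A.
Proof. by rewrite subnK // rank_le_rank1_sum. Qed.

Lemma defect0 : defect set0 = 0.
Proof. by rewrite /defect /rank1_sum big_set0. Qed.

Lemma defect_supermod (A B : {set E}) :
  defect A + defect B <= defect (A :|: B) + defect (A :&: B).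
Proof.
have := defect_rank A; have := defect_rank B; have := defect_rank (A :|: B).
have := defect_rank (A :&: B); have := rank1_sumUI A B; have := rank_submod A B.
lia.
Qed.

Lemma defectS (A B : {set E}) : A \subset B -> defect A <= defect B.
Proof.
move=> sAB; have := defect_supermod (B :&: A) (B :\: A).
have -> : (B :&: A) :&: (B :\: A) = set0.
  by apply/setP => x; rewrite !inE; case: (x \in A); rewrite ?andbF.
by rewrite setID defect0 addn0 (setIidPr sAB); apply: leq_trans; apply: leq_addr.
Qed.

Lemma defectU1_le x (A : {set E}) : defect (x |: A) <= defect A + 1.
Proof.
have := rankS (subsetUr [set x] A); have := defect_rank A; have := defect_rank (x |: A).
have [xA | xNA] := boolP (x \in A); first by rewrite (setUidPr _) ?sub1set //; lia.
rewrite rank1_sumU1 //; have := rank1_le1 x; lia.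
Qed.

Lemma defect_le_card (A : {set E}) : defect A <= #|A| - 1.
Proof.
have [rA0 | rA_gt0] := posnP (r A).
  rewrite /defect rA0 subn0 /rank1_sum big1 // => x xA.
  by apply/eqP; rewrite -leqn0 -rA0 rankS // sub1set.
by have := rank1_sum_le_card A; rewrite /defect; lia.
Qed.

Definition parallel x y := [&& r [set x] == 1, r [set y] == 1 & r [set x; y] == 1].

Lemma parallel_sym x y : parallel x y -> parallel y x.
Proof. by rewrite /parallel setUC => /and3P[-> -> ->]. Qed.

Lemma parallel_refl_l x y : parallel x y -> parallel x x.
Proof. by rewrite /parallel setUid => /and3P[-> _ _]. Qed.

Lemma parallel_trans x y z : parallel x y -> parallel y z -> parallel x z.
Proof.
move=> /and3P[/eqP rx /eqP ry /eqP rxy] /and3P[_ /eqP rz /eqP ryz].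
rewrite /parallel rx rz eqxx /=.
have sx : [set x] \subset [set x; z] by rewrite sub1set !inE eqxx.
have sy : [set y] \subset [set x; y] :&: [set y; z] by rewrite sub1set !inE !eqxx orbT.
have sU : [set x; z] \subset [set x; y] :|: [set y; z].
  by apply/subsetP => u; rewrite !inE => /orP[] ->; rewrite ?orbT.
have := rank_submod [set x; y] [set y; z].
have := rankS sx; have := rankS sy; have := rankS sU; lia.
Qed.

Lemma parallel_defect x y : x != y -> parallel x y = (0 < defect [set x; y]).
Proof.
move=> xy; have := defect_rank [set x; y]; rewrite rank1_sumU1 ?inE // /rank1_sum big_set1.
have := rankS (subsetUl [set x] [set y]); have := rankS (subsetUr [set x] [set y]).
have := rank1_le1 x; have := rank1_le1 y; rewrite /parallel; lia.
Qed.

Lemma parallel_defect_gt0 x y (S : {set E}) :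
  x != y -> parallel x y -> x \in S -> y \in S -> 0 < defect S.
Proof.
move=> xy; rewrite parallel_defect // => dxy xS yS; apply: leq_trans dxy (defectS _).
by apply/subsetP => z; rewrite !inE => /orP[] /eqP ->.
Qed.

Lemma rankU1_parallel x y (A : {set E}) : y \in A -> parallel x y -> r (x |: A) <= r A.
Proof.
move=> yA /and3P[_ /eqP ry /eqP rxy].
have sU : x |: A \subset A :|: [set x; y].
  by apply/subsetP => z; rewrite !inE => /orP[] ->; rewrite ?orbT.
have sI : [set y] \subset A :&: [set x; y] by rewrite sub1set !inE yA eqxx orbT.
have := rank_submod A [set x; y]; have := rankS sU; have := rankS sI; lia.
Qed.

Lemma defect_supermodU1 (P : {set E}) y z : y != z ->
  defect (y |: P) + defect (z |: P) <= defect (y |: (z |: P)) + defect P.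
Proof.
move=> yz; have := defect_supermod (y |: P) (z |: P).
rewrite setUACA setUid -setUA -setUIl (_ : [set y] :&: [set z] = set0) ?set0U //.
by apply/eqP; rewrite setI_eq0 disjoints1 inE.
Qed.

Lemma defect_triangles_le_K4 u v w h : u != v -> u != h -> v != h ->
  defect [set u; w] = 0 -> defect [set v; w] = 0 -> defect [set w; h] = 0 ->
  defect [set u; v; h] = 0 ->
  defect [set u; v; w] + defect [set u; w; h] + defect [set v; w; h]
    <= defect (w |: [set u; v; h]).
Proof.
move=> uv uh vh duw dvw dwh duvh.
have := defect_supermodU1 [set u; w] vh; have := defect_supermodU1 [set v; w] uh.
have := defect_supermodU1 [set w; h] uv; have := defectU1_le w [set u; v; h].
have eqs : [/\ v |: (h |: [set u; w]) = w |: [set u; v; h],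
                u |: (h |: [set v; w]) = w |: [set u; v; h],
                u |: (v |: [set w; h]) = w |: [set u; v; h] &
                [/\ v |: [set u; w] = [set u; v; w], u |: [set v; w] = [set u; v; w],
                    h |: [set u; w] = [set u; w; h], u |: [set w; h] = [set u; w; h] &
                    [/\ h |: [set v; w] = [set v; w; h] & v |: [set w; h] = [set v; w; h]]]].
  by do ![split]; apply/setP => x; rewrite !inE;
    case: (x == u); case: (x == v); case: (x == w); case: (x == h).
case: eqs => -> -> -> [-> -> -> -> [-> ->]]; lia.
Qed.

Definition parallel_set (A : {set E}) := [forall x in A, forall y in A, parallel x y].

Lemma parallel_setP (A : {set E}) :
  reflect {in A &, forall x y, parallel x y} (parallel_set A).
Proof.
apply: (iffP forall_inP) => [h x y xA yA | h x xA].
  by move/forall_inP: (h x xA); apply.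
by apply/forall_inP => y yA; apply: h.
Qed.

Lemma parallel_setS (A B : {set E}) : A \subset B -> parallel_set B -> parallel_set A.
Proof.
move=> /subsetP sAB /parallel_setP pB; apply/parallel_setP => x y xA yA.
by apply: pB; apply: sAB.
Qed.

Lemma parallel_setU1 x y (A : {set E}) :
  y \in A -> parallel x y -> parallel_set A -> parallel_set (x |: A).
Proof.
move=> yA pxy /parallel_setP pA.
have py z : z \in x |: A -> parallel z y by rewrite !inE => /orP[/eqP -> // | zA]; apply: pA.
apply/parallel_setP => z t zA tA.
by apply: (parallel_trans (py z zA) (parallel_sym (py t tA))).
Qed.

Lemma parallel_set_rank x (A : {set E}) : x \in A -> parallel_set A -> r A = 1.
Proof.
elim: {A}#|A| {-2}A (erefl #|A|) x => [|m IH] A cardA x xA pA.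
  by move: cardA; rewrite (cardsD1 x) xA.
have /and3P[/eqP rx _ _] : parallel x x by move/parallel_setP: pA; apply.
rewrite -(setD1K xA); have [-> | [y yAx]] := set_0Vmem (A :\ x); first by rewrite setU0.
have pxy : parallel x y by move/parallel_setP: pA; apply; last by case/setD1P: yAx.
have rAx : r (A :\ x) = 1.
  apply: (IH _ _ y yAx (parallel_setS (subsetDl A _) pA)).
  by move: cardA; rewrite (cardsD1 x) xA => -[].
by apply/eqP; rewrite eqn_leq -{1}rAx (rankU1_parallel yAx pxy) -rx rankS // subsetUl.
Qed.

Lemma parallel_set_defect x (A : {set E}) : x \in A -> parallel_set A -> defect A = #|A| - 1.
Proof.
move=> xA pA; rewrite /defect (parallel_set_rank xA pA) /rank1_sum -sum1_card.
congr (_ - 1); apply: eq_bigr => y yA.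
by move/parallel_setP: pA => /(_ y y yA yA) /and3P[/eqP].
Qed.

End MatroidDefect.

Lemma sum_nat_of_bool (T : finType) (P : pred T) :
  \sum_(i : T) (P i : nat) = #|[set i | P i]|.
Proof. by rewrite -sum1dep_card [RHS]big_mkcond; apply: eq_bigr => i _; case: (P i). Qed.

Lemma sum_in_nat_of_bool (T : finType) (A B : {set T}) :
  \sum_(x in A) (x \in B : nat) = #|A :&: B|.
Proof.
rewrite (@big_setID _ _ _ _ A B) /= [X in _ + X]big1 => [|x]; last first.
  by rewrite inE => /andP[/negbTE ->].
by rewrite addn0 -sum1_card; apply: eq_bigr => x; rewrite inE => /andP[_ ->].
Qed.

Lemma sum_nat_gt0 (I : finType) (F : I -> nat) : (0 < \sum_i F i) = [exists i, 0 < F i].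
Proof. by rewrite lt0n sum_nat_eq0 negb_forall; apply: eq_existsb => i; rewrite lt0n. Qed.

Lemma sum_ge3 (I : finType) (F : I -> nat) p q r : p != q -> p != r -> q != r ->
  0 < F p -> 0 < F q -> 0 < F r -> 3 <= \sum_i F i.
Proof.
move=> pq pr qr Fp Fq Fr; rewrite (bigD1 p) // (bigD1 q) /=; last by rewrite eq_sym.
by rewrite (bigD1 r) /=; [lia | rewrite !(eq_sym r) pr qr].
Qed.

Lemma sum_le_offpoint (I : finType) (F G : I -> nat) a :
  (forall b, b != a -> F b <= G b) -> \sum_i F i + G a <= \sum_i G i + F a.
Proof.
move=> FG; rewrite (bigD1 a) //= [X in _ <= X + _](bigD1 a) //=.
by have := leq_sum (index_enum I) FG; lia.
Qed.

Lemma sum_nat_le_other (I : finType) (F : I -> nat) a b m :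
  \sum_i F i <= m -> m <= F a -> b != a -> F b = 0.
Proof. by move=> sF aF ba; move: sF; rewrite (bigD1 a) // (bigD1 b) //=; lia. Qed.

Lemma cards1I (T : finType) (x : T) (A : {set T}) : #|[set x] :&: A| = (x \in A).
Proof.
have [xA | xNA] := boolP (x \in A); first by rewrite (setIidPl _) ?cards1 ?sub1set.
by apply/eqP; rewrite cards_eq0 setI_eq0 disjoints1.
Qed.

Lemma card_le1_set1 (T : finType) (A : {set T}) x : x \in A -> #|A| <= 1 -> A = [set x].
Proof. by move=> xA A1; apply/eqP; rewrite eq_sym eqEcard sub1set xA cards1. Qed.

Lemma card_le2_set2 (T : finType) (A : {set T}) x y :
  x != y -> x \in A -> y \in A -> #|A| <= 2 -> A = [set x; y].
Proof.
move=> xy xA yA A2; apply/eqP; rewrite eq_sym eqEcard cards2 xy A2 andbT.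
by apply/subsetP => z; rewrite !inE => /orP[] /eqP ->.
Qed.

Lemma cards3_le (T : finType) (x y z : T) : #|[set x; y; z]| <= 3.
Proof. by rewrite !cardsU !cards1; lia. Qed.

Lemma cards3 (T : finType) (x y z : T) :
  x != y -> x != z -> y != z -> #|[set x; y; z]| = 3.
Proof. by move=> xy xz yz; rewrite -setUA cardsU1 cards2 !inE negb_or xy xz yz. Qed.

Lemma c1_c2plus_le_sum n k (c : 'I_n -> 'I_k) (f : 'I_k -> nat) :
  (forall t, #|[set i | c i == t]| = 1 -> 0 < f t) ->
  (forall t, 1 < #|[set i | c i == t]| -> 1 < f t) ->
  c1 c + 2 * c2plus c <= \sum_t f t.
Proof.
move=> f1 f2; rewrite /c1 /c2plus -!sum_nat_of_bool mul2n -addnn -!big_split /=.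
apply: leq_sum => t _; move: (f1 t) (f2 t).
by case: #|_| => [|[|m]] //= h1 h2; [apply: h1 | apply: h2].
Qed.

Lemma card_colors_le n k (c : 'I_n -> 'I_k) : #|c @: [set: 'I_n]| <= c1 c + c2plus c.
Proof.
rewrite /c1 /c2plus; apply: leq_trans (subset_leq_card _) (leq_card_setU _ _).1.
apply/subsetP => _ /imsetP[j _ ->]; rewrite !inE.
have : 0 < #|[set i | c i == c j]| by apply/card_gt0P; exists j; rewrite inE.
by case: #|_| => [|[|]].
Qed.

Lemma bigmin_le (I : eqType) (r : seq I) (P : pred I) (F : I -> nat) d x :
  x \in r -> P x -> \big[minn/d]_(i <- r | P i) F i <= F x.
Proof.
elim: r => // a r IH; rewrite inE big_cons => /orP[/eqP <- | xr] Px; first by rewrite Px geq_minl.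
by case: (P a); [apply: leq_trans (geq_minr _ _) (IH xr Px) | apply: IH].
Qed.

Lemma colorable_card_colors (E : finType) n (X : 'I_n -> {set E}) k (c : 'I_n -> 'I_k) :
  proper_coloring X c -> colorable X #|c @: [set: 'I_n]|.
Proof.
move=> c_proper; apply/existsP; exists [ffun j => enum_rank_in (imset_f c (in_setT j)) (c j)].
apply/forallP => i; apply/forallP => j; apply/implyP => ij; rewrite !ffunE.
apply: contra (c_proper i j ij) => /eqP/(congr1 enum_val).
by rewrite !enum_rankK_in ?imset_f ?in_setT // => ->.
Qed.

Lemma chi_line_le_card_colors (E : finType) n (X : 'I_n -> {set E}) k (c : 'I_n -> 'I_k) :
  proper_coloring X c -> chi_line X <= #|c @: [set: 'I_n]|.
Proof.
move=> c_proper; have lt_n : #|c @: [set: 'I_n]| < n.+1.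
  by rewrite ltnS (leq_trans (leq_imset_card _ _)) // cardsT card_ord.
apply: (bigmin_le _ _ (mem_index_enum (Ordinal lt_n))).
exact: colorable_card_colors.
Qed.

Section Hypergraph.
Variables (E : finType) (n : nat) (X : 'I_n -> {set E}).
Hypothesis X_meet_le1 : forall i j : 'I_n, i != j -> #|X i :&: X j| <= 1.

Definition excess (T : {set E}) := \sum_(j < n) (#|T :&: X j| - 1).

Lemma hyperedges_meet_once j l (x y : E) : j != l ->
  x \in X j -> x \in X l -> y \in X j -> y \in X l -> x = y.
Proof.
move=> jl xj xl yj yl; apply/eqP; apply: contraLR (X_meet_le1 jl) => xy.
by rewrite -ltnNge; apply/card_gt1P; exists x, y; rewrite !inE xj xl yj yl.
Qed.

Lemma count_hyperedges_pair_le1 (x y : E) :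
  x != y -> \sum_j ((x \in X j) && (y \in X j) : nat) <= 1.
Proof.
move=> xy; rewrite sum_nat_of_bool leqNgt; apply/card_gt1P => -[j [l [+ + jl]]].
rewrite !inE => /andP[xj yj] /andP[xl yl].
by move: xy; rewrite (hyperedges_meet_once jl xj xl yj yl) eqxx.
Qed.

Lemma excessU1 x (T : {set E}) : x \notin T -> excess (x |: T) <= excess T + #|T|.
Proof.
move=> xNT.
have termwise j : #|(x |: T) :&: X j| - 1
    <= #|T :&: X j| - 1 + \sum_(y in T) ((x \in X j) && (y \in X j) : nat).
  have [xj | xNj] := boolP (x \in X j); last first.
    rewrite (_ : (x |: T) :&: X j = T :&: X j) ?leq_addr //.
    by apply/setP => z; rewrite !inE; case: eqP => // ->; rewrite (negbTE xNj) !andbF.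
  rewrite (_ : (x |: T) :&: X j = x |: (T :&: X j)); last first.
    by apply/setP => z; rewrite !inE; case: eqP => // ->; rewrite xj.
  rewrite cardsU1 inE (negbTE xNT) /=.
  have [->|[y]] := set_0Vmem (T :&: X j); first by rewrite cards0.
  by rewrite inE => /andP[yT yj]; rewrite (bigD1 y) //= yj; lia.
apply: leq_trans (leq_sum _ (fun j _ => termwise j)) _.
rewrite big_split leq_add2l /= exchange_big -sum1_card leq_sum // => y yT.
by apply: count_hyperedges_pair_le1; apply: contraNneq xNT => ->.
Qed.

Lemma excess1 x : excess [set x] = 0.
Proof.
rewrite /excess big1 // => j _; apply/eqP.
by rewrite subn_eq0 -(cards1 x) subset_leq_card ?subsetIl.
Qed.

Lemma excess2_le1 x y : excess [set x; y] <= 1.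
Proof.
have [-> | xy] := eqVneq x y; first by rewrite setUid excess1.
by have := excessU1 (_ : x \notin [set y]); rewrite excess1 cards1 inE; apply.
Qed.

Lemma excess_subset_hyperedge (T : {set E}) m : T \subset X m -> excess T = #|T| - 1.
Proof.
move=> sTm; rewrite /excess (bigD1 m) //= (setIidPl sTm) big1 ?addn0 // => j jm.
apply/eqP; rewrite subn_eq0; apply: leq_trans (X_meet_le1 (_ : m != j)); last by rewrite eq_sym.
exact: subset_leq_card (setSI _ sTm).
Qed.

Lemma excess_ge3 (T : {set E}) j1 j2 j3 : j1 != j2 -> j1 != j3 -> j2 != j3 ->
  1 < #|T :&: X j1| -> 1 < #|T :&: X j2| -> 1 < #|T :&: X j3| -> 3 <= excess T.
Proof.
by move=> j12 j13 j23 T1 T2 T3; apply: (sum_ge3 j12 j13 j23); rewrite subn_gt0.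
Qed.

Lemma excess_gt0 (T : {set E}) : (0 < excess T) = [exists j, 1 < #|T :&: X j|].
Proof.
by rewrite sum_nat_gt0; apply: eq_existsb => j; rewrite subn_gt0.
Qed.

Section Decomposition.
Variables (k : nat) (M : 'I_k -> {set E} -> nat).
Hypothesis M_matroid : forall i, is_matroid_rank (M i).
Hypothesis M_sum_small : forall A : {set E}, #|A| <= 4 -> \sum_(i < k) M i A = hrho X A.

Lemma sum_rank1 x : \sum_i M i [set x] = \sum_j (x \in X j : nat).
Proof.
rewrite M_sum_small ?cards1 //; apply: eq_bigr => j _.
by rewrite cards1I; case: (x \in X j).
Qed.

Lemma sum_defect (T : {set E}) : #|T| <= 4 -> \sum_i defect (M i) T = excess T.
Proof.
move=> T4; rewrite /defect sumnB => [|i _]; last exact: rank_le_rank1_sum.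
rewrite M_sum_small // /rank1_sum exchange_big /=.
under eq_bigr => x _ do rewrite sum_rank1.
rewrite exchange_big /=.
under eq_bigr => j _ do rewrite sum_in_nat_of_bool.
rewrite /hrho /excess -sumnB => [|j _]; last exact: geq_minl.
by apply: eq_bigr => j _; lia.
Qed.

Lemma sum_defect_pair_le1 x y : \sum_i defect (M i) [set x; y] <= 1.
Proof. by rewrite sum_defect ?excess2_le1 // cards2; case: (x != y). Qed.

Lemma sum_defect_subset_hyperedge (T : {set E}) m :
  T \subset X m -> #|T| <= 4 -> \sum_i defect (M i) T = #|T| - 1.
Proof. by move=> sTm T4; rewrite sum_defect // (excess_subset_hyperedge sTm). Qed.

Lemma sum_defect_triangle x y z j1 j2 j3 :
  x != y -> x != z -> y != z -> j1 != j2 -> j1 != j3 -> j2 != j3 ->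
  x \in X j1 -> y \in X j1 -> x \in X j2 -> z \in X j2 -> y \in X j3 -> z \in X j3 ->
  3 <= \sum_i defect (M i) [set x; y; z].
Proof.
move=> xy xz yz j12 j13 j23 xj1 yj1 xj2 zj2 yj3 zj3.
rewrite sum_defect ?(leq_trans (cards3_le x y z)) //.
apply: (excess_ge3 j12 j13 j23); apply/card_gt1P.
- by exists x, y; rewrite !inE !eqxx xj1 yj1 xy ?orbT.
- by exists x, z; rewrite !inE !eqxx xj2 zj2 xz ?orbT.
- by exists y, z; rewrite !inE !eqxx yj3 zj3 yz ?orbT.
Qed.

Lemma exists_parallel x y m :
  x != y -> x \in X m -> y \in X m -> exists i, parallel (M i) x y.
Proof.
move=> xy xm ym.
have : 0 < \sum_i defect (M i) [set x; y].
  rewrite sum_defect ?cards2 ?xy // excess_gt0; apply/existsP; exists m.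
  by apply/card_gt1P; exists x, y; rewrite !inE !eqxx xm ym xy ?orbT.
by rewrite sum_nat_gt0 => /existsP[i]; rewrite -(parallel_defect (M_matroid i) xy); exists i.
Qed.

Lemma parallel_hyperedge i x y :
  x != y -> parallel (M i) x y -> exists m, x \in X m /\ y \in X m.
Proof.
move=> xy; rewrite (parallel_defect (M_matroid i) xy) => dxy.
have : 0 < excess [set x; y].
  by rewrite -sum_defect ?cards2 ?xy // (bigD1 i) //= ltn_addr.
rewrite excess_gt0 => /existsP[m]; rewrite setIUl cardsU !cards1I => xym.
by exists m; move: xym; case: (x \in X m); case: (y \in X m) => //=; lia.
Qed.

Lemma parallel_uniq i b x y :
  x != y -> parallel (M i) x y -> parallel (M b) x y -> i = b.
Proof.
move=> xy; rewrite (parallel_defect (M_matroid i) xy) (parallel_defect (M_matroid b) xy).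
move=> di db; apply/eqP; apply: contraLR (sum_defect_pair_le1 x y) => ib.
rewrite -ltnNge (bigD1 i) //= (bigD1 b) /=; last by rewrite eq_sym.
lia.
Qed.

Lemma parallel_hyperedge_extend i m x y z :
  x \in X m -> y \in X m -> z \in X m -> x != y -> x != z -> y != z ->
  parallel (M i) x y -> parallel (M i) x z.
Proof.
move=> xm ym zm xy xz yz pxy; apply/negPn/negP => pNxz.
have [b pxz] := exists_parallel xz xm zm.
have [c pyz] := exists_parallel yz ym zm.
have ib : i != b by apply: contraNneq pNxz => ->.
have ic : i != c.
  apply: contraNneq pNxz => ic; rewrite ic in pxy *.
  by apply: (parallel_trans (M_matroid c) pxy pyz).
have bc : b != c.
  apply/eqP => bc; move/eqP: ib; apply; apply: (parallel_uniq xy pxy).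
  by rewrite bc in pxz *; apply: (parallel_trans (M_matroid c) pxz (parallel_sym pyz)).
set T := [set x; y; z].
have T_sub : T \subset X m by apply/subsetP => u; rewrite !inE => /orP[/orP[]|] /eqP ->.
have [xT yT zT] : [/\ x \in T, y \in T & z \in T] by rewrite !inE !eqxx ?orbT.
have := sum_ge3 (F := fun b => defect (M b) T) ib ic bc
  (parallel_defect_gt0 (M_matroid i) xy pxy xT yT)
  (parallel_defect_gt0 (M_matroid b) xz pxz xT zT)
  (parallel_defect_gt0 (M_matroid c) yz pyz yT zT).
rewrite (sum_defect_subset_hyperedge T_sub (leq_trans (cards3_le x y z) (leqnSn 3))).
by move/leq_trans/(_ (leq_sub2r 1 (cards3_le x y z))).
Qed.

Lemma parallel_set_hyperedge i m x y :
  x \in X m -> y \in X m -> x != y -> parallel (M i) x y -> parallel_set (M i) (X m).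
Proof.
move=> xm ym xy pxy.
have px z : z \in X m -> parallel (M i) x z.
  move=> zm; have [-> | zx] := eqVneq z x; first exact: parallel_refl_l pxy.
  have [-> // | zy] := eqVneq z y.
  by apply: (parallel_hyperedge_extend xm ym zm xy _ _ pxy); rewrite eq_sym.
apply/parallel_setP => u v um vm.
by apply: (parallel_trans (M_matroid i) (parallel_sym (px u um)) (px v vm)).
Qed.

Lemma defect_triangles_le_off a b u v w h m :
  b != a -> u != v -> u != h -> v != h -> w \notin [set u; v; h] ->
  [set u; v; h] \subset X m -> parallel_set (M a) (w |: [set u; v; h]) ->
  defect (M b) [set u; v; w] + defect (M b) [set u; w; h] + defect (M b) [set v; w; h]
    <= defect (M b) (w |: [set u; v; h]).
Proof.
move=> ba uv uh vh wNT0 T0_sub pT.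
have [wu wv wh] : [/\ w != u, w != v & w != h].
  by move: wNT0; rewrite !inE !negb_or => /andP[/andP[-> ->] ->].
have pair_gt0 x y : x != y -> x \in w |: [set u; v; h] -> y \in w |: [set u; v; h] ->
    0 < defect (M a) [set x; y].
  by move=> xy xT yT; rewrite -(parallel_defect (M_matroid a) xy); move/parallel_setP: pT; apply.
have [Tu Tv Tw Th] : [/\ u \in w |: [set u; v; h], v \in w |: [set u; v; h],
    w \in w |: [set u; v; h] & h \in w |: [set u; v; h]] by rewrite !inE !eqxx ?orbT.
have a_T0 : defect (M a) [set u; v; h] = 2.
  have uT0 : u \in [set u; v; h] by rewrite !inE eqxx.
  by rewrite (parallel_set_defect (M_matroid a) uT0 (parallel_setS (subsetUr _ _) pT)) cards3.
have sum_T0 : \sum_i defect (M i) [set u; v; h] = 2.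
  by rewrite (sum_defect_subset_hyperedge T0_sub) ?cards3.
apply: (defect_triangles_le_K4 (M_matroid b) uv uh vh).
- apply: (sum_nat_le_other (sum_defect_pair_le1 u w) (pair_gt0 u w _ Tu Tw) ba).
  by rewrite eq_sym.
- apply: (sum_nat_le_other (sum_defect_pair_le1 v w) (pair_gt0 v w _ Tv Tw) ba).
  by rewrite eq_sym.
- by apply: (sum_nat_le_other (sum_defect_pair_le1 w h) (pair_gt0 w h wh Tw Th) ba).
- by apply: (sum_nat_le_other (eq_leq sum_T0) (eq_leq (esym a_T0)) ba).
Qed.

(* In M a the four points form a parallel class, which takes defect 3 of the excess 5 of
   T; the three triangles through w need excess 3 each, but in the other matroids they only
   fit into the remaining share of T. *)
Lemma parallel_K4_false a u v w h A B C p :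
  u != v -> u != h -> v != h -> B != C -> B != p -> C != p ->
  u \in X A -> v \in X A -> h \in X A -> w \notin X A ->
  u \in X B -> w \in X B -> v \in X C -> w \in X C -> w \in X p -> h \in X p ->
  parallel_set (M a) (w |: [set u; v; h]) -> False.
Proof.
move=> uv uh vh BC Bp Cp uA vA hA wNA uB wB vC wC wp hp pT.
have [AB AC Ap] : [/\ A != B, A != C & A != p] by split; apply: contraNneq wNA => ->.
have [BA CA] : B != A /\ C != A by rewrite ![_ == A]eq_sym.
have [uw vw wh] : [/\ u != w, v != w & w != h].
  by split; [apply: contraNneq wNA => <- | apply: contraNneq wNA => <- |
             apply: contraNneq wNA => ->].
have T0_sub : [set u; v; h] \subset X A.
  by apply/subsetP => z; rewrite !inE => /orP[/orP[]|] /eqP ->.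
have wNT0 : w \notin [set u; v; h] by apply: contraNN wNA; apply: (subsetP T0_sub).
have T_card : #|w |: [set u; v; h]| = 4 by rewrite cardsU1 wNT0 cards3.
have sum_T : \sum_b defect (M b) (w |: [set u; v; h]) <= 5.
  rewrite sum_defect ?T_card //; apply: leq_trans (excessU1 wNT0) _.
  by rewrite (excess_subset_hyperedge T0_sub) cards3.
have a_T : defect (M a) (w |: [set u; v; h]) = 3.
  by rewrite (parallel_set_defect (M_matroid a) (setU11 w _) pT) T_card.
have a_le2 x y z : defect (M a) [set x; y; z] <= 2.
  exact: leq_trans (defect_le_card (M_matroid a) _) (leq_sub2r 1 (cards3_le x y z)).
have sum_F := leq_add (leq_add (sum_defect_triangle uv uw vw AB AC BC uA vA uB wB vC wC)
  (sum_defect_triangle uw uh wh BA Bp Ap uB wB uA hA wp hp))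
  (sum_defect_triangle vw vh wh CA Cp Ap vC wC vA hA wp hp).
rewrite -!big_split /= in sum_F.
have off b (ba : b != a) := defect_triangles_le_off ba uv uh vh wNT0 T0_sub pT.
have a_F := leq_add (leq_add (a_le2 u v w) (a_le2 u w h)) (a_le2 v w h).
have := leq_trans (leq_add sum_F (eq_leq (esym a_T))) (sum_le_offpoint off).
by move/leq_trans/(_ (leq_add sum_T a_F)).
Qed.

Lemma parallel_triangle_card_le2 a u v w A B C :
  u != v -> u != w -> v != w ->
  u \in X A -> v \in X A -> w \notin X A -> u \in X B -> w \in X B -> v \in X C -> w \in X C ->
  parallel_set (M a) (X A) -> parallel_set (M a) (X B) -> #|X A| <= 2.
Proof.
move=> uv uw vw uA vA wNA uB wB vC wC pA /parallel_setP pB.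
rewrite leqNgt; apply/negP => A_gt2.
have /card_gt0P[h] : 0 < #|X A :\: [set u; v]|.
  rewrite cardsD subn_gt0; apply: leq_trans A_gt2.
  by rewrite ltnS (leq_trans (subset_leq_card (subsetIr _ _))) // cards2 uv.
rewrite !inE negb_or => /andP[/andP[hu hv] hA].
have AB : A != B by apply: contraNneq wNA => ->.
have AC : A != C by apply: contraNneq wNA => ->.
have BC : B != C.
  by apply: contraNneq uv => BC; apply/eqP/(hyperedges_meet_once AB uA uB vA); rewrite BC.
have pwu := parallel_sym (pB u w uB wB).
have wh : w != h by apply: contraNneq wNA => ->.
have puh : parallel (M a) u h by move/parallel_setP: pA; apply.
have [p [wp hp]] := parallel_hyperedge wh (parallel_trans (M_matroid a) pwu puh).
have T0_sub : [set u; v; h] \subset X A.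
  by apply/subsetP => z; rewrite !inE => /orP[/orP[]|] /eqP ->.
have uT0 : u \in [set u; v; h] by rewrite !inE eqxx.
have pT := parallel_setU1 (M_matroid a) uT0 pwu (parallel_setS T0_sub pA).
have hNB : h \notin X B.
  by apply: contraNN hu => hB; apply/eqP; apply: (hyperedges_meet_once AB hA hB uA uB).
have hNC : h \notin X C.
  by apply: contraNN hv => hC; apply/eqP; apply: (hyperedges_meet_once AC hA hC vA vC).
have Bp : B != p by apply: contraNneq hNB => ->.
have Cp : C != p by apply: contraNneq hNC => ->.
by apply: (parallel_K4_false uv _ _ BC Bp Cp uA vA hA wNA uB wB vC wC wp hp pT);
  rewrite eq_sym.
Qed.

Hypothesis X_triangle_free : ~ (exists a b c : E, [/\ a != b, a != c, b != c &
  [/\ exists i, X i = [set a; b], exists i, X i = [set a; c] & exists i, X i = [set b; c]]]).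

Lemma meeting_hyperedges_not_parallel a j l e : j != l -> e \in X j -> e \in X l ->
  1 < #|X j| -> 1 < #|X l| -> parallel_set (M a) (X j) -> parallel_set (M a) (X l) -> False.
Proof.
move=> jl ej el cj cl pj pl.
have /card_gt0P[f /setD1P[fe fj]] : 0 < #|X j :\ e| by move: cj; rewrite (cardsD1 e) ej.
have /card_gt0P[g /setD1P[ge gl]] : 0 < #|X l :\ e| by move: cl; rewrite (cardsD1 e) el.
have fNl : f \notin X l.
  by apply: contraNN fe => fl; apply/eqP; apply: (hyperedges_meet_once jl fj fl ej el).
have gNj : g \notin X j.
  by apply: contraNN ge => gj; apply/eqP; apply: (hyperedges_meet_once jl gj gl ej el).
have fg : f != g by apply: contraNneq gNj => <-.
have pfe : parallel (M a) f e by move/parallel_setP: pj; apply.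
have peg : parallel (M a) e g by move/parallel_setP: pl; apply.
have pfg := parallel_trans (M_matroid a) pfe peg.
have [m [fm gm]] := parallel_hyperedge fg pfg.
have pm := parallel_set_hyperedge fm gm fg pfg.
have eNm : e \notin X m.
  apply: contraNN fe => em; have mj : m != j by apply: contraNneq gNj => <-.
  by apply/eqP; apply: (hyperedges_meet_once mj fm fj em ej).
have [ef eg gf] : [/\ e != f, e != g & g != f] by split; rewrite eq_sym.
apply: X_triangle_free; exists e, f, g; split => //; split; [exists j | exists l | exists m];
  apply: card_le2_set2 => //.
- by apply: (parallel_triangle_card_le2 ef eg fg ej fj gNj el gl fm gm pj pl).
- by apply: (parallel_triangle_card_le2 eg ef gf el gl fNl ej fj gm fm pl pj).
- by apply: (parallel_triangle_card_le2 fg fe ge fm gm eNm fj ej gl el pm pj).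
Qed.

Hypothesis X_neq0 : forall j, X j != set0.
Hypothesis X_inj : injective X.

Definition admissible_color j i := parallel_set (M i) (X j) &&
  [forall l, [&& l != j, X l :&: X j != set0 & 1 < #|X l|] ==> ~~ parallel_set (M i) (X l)].

Lemma card_parallel_set_le1 l : 1 < #|X l| -> #|[set i | parallel_set (M i) (X l)]| <= 1.
Proof.
case/card_gt1P => x [y [xl yl xy]]; rewrite leqNgt; apply/negP => /card_gt1P[i [b [+ + ib]]].
rewrite !inE => /parallel_setP pi /parallel_setP pb; move/eqP: ib; apply.
exact: parallel_uniq xy (pi x y xl yl) (pb x y xl yl).
Qed.

Lemma admissible_color_nontrivial j : 1 < #|X j| -> exists i, admissible_color j i.
Proof.
move=> cj; have /card_gt1P[x [y [xj yj xy]]] := cj.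
have [i pxy] := exists_parallel xy xj yj.
have pj := parallel_set_hyperedge xj yj xy pxy.
exists i; rewrite /admissible_color pj; apply/forall_inP => l /and3P[lj /set0Pn[e] + cl].
rewrite inE => /andP[el ej]; apply/negP => pl.
exact: meeting_hyperedges_not_parallel lj el ej cl cj pl pj.
Qed.

(* The point e is a non-loop in exactly deg(e) matroids, while the fewer than deg(e)
   nontrivial hyperedges through e claim at most one matroid each. *)
Lemma admissible_color_singleton j : #|X j| <= 1 -> exists i, admissible_color j i.
Proof.
move=> cj; have [e ej] := set0Pn _ (X_neq0 j); have Xj := card_le1_set1 ej cj.
pose L := [set l | [&& l != j, e \in X l & 1 < #|X l|]].
pose U := [set i | [exists l in L, parallel_set (M i) (X l)]].
pose N := [set i | M i [set e] == 1].
have cardN : #|N| = \sum_l (e \in X l : nat).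
  rewrite /N -sum_nat_of_bool -sum_rank1; apply: eq_bigr => i _.
  by have := rank1_le1 (M_matroid i) e; case: (M i [set e]) => [|[|]].
have cardU : #|U| <= #|L|.
  apply: (@leq_trans (\sum_(l in L) \sum_i (parallel_set (M i) (X l) : nat))); last first.
    rewrite -sum1_card; apply: leq_sum => l; rewrite inE sum_nat_of_bool => /and3P[_ _].
    exact: card_parallel_set_le1.
  rewrite /U -sum_nat_of_bool exchange_big /=; apply: leq_sum => i _.
  have [/exists_inP[l lL pl] | //] := boolP [exists l in L, parallel_set (M i) (X l)].
  by rewrite (bigD1 l) //= pl.
have cardL : #|L| < \sum_l (e \in X l : nat).
  rewrite sum_nat_of_bool; apply: proper_card; apply/properP; split.
    by apply/subsetP => l; rewrite !inE => /and3P[].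
  by exists j; rewrite !inE ?eqxx // ej.
have /subsetPn[i iN iNU] : ~~ (N \subset U).
  by apply/negP => /subset_leq_card; rewrite cardN leqNgt (leq_ltn_trans cardU cardL).
exists i; apply/andP; split.
  rewrite Xj; apply/parallel_setP => x y; rewrite !inE => /eqP -> /eqP ->.
  by move: iN; rewrite inE /parallel setUid => ->.
apply/forall_inP => l /and3P[lj /set0Pn[z] + cl]; rewrite Xj inE => /andP[zl /set1P ze].
apply: contra iNU => pl; rewrite inE; apply/exists_inP; exists l => //.
by rewrite inE lj -ze zl cl.
Qed.

Lemma admissible_color_exists j : exists i, admissible_color j i.
Proof.
by case: (ltnP 1 #|X j|); [apply: admissible_color_nontrivial | apply: admissible_color_singleton].
Qed.

Section AdmissibleColoring.
Variable c : 'I_n -> 'I_k.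
Hypothesis c_admissible : forall j, admissible_color j (c j).

Lemma admissible_coloring_proper : proper_coloring X c.
Proof.
move=> j l /andP[jl meet]; apply/eqP => cjl.
have /andP[pj /forall_inP Fj] := c_admissible j.
have /andP[pl /forall_inP Fl] := c_admissible l.
have [cl | cl] := ltnP 1 #|X l|.
  by move: (Fj l); rewrite [l == j]eq_sym jl setIC meet cl cjl pl => /(_ isT).
have [cj | cj] := ltnP 1 #|X j|.
  by move: (Fl j); rewrite jl meet cj -cjl pj => /(_ isT).
have /set0Pn[e /setIP[ej el]] := meet.
by move/eqP: jl; apply; apply: X_inj; rewrite (card_le1_set1 ej cj) (card_le1_set1 el cl).
Qed.

Lemma color_rank_gt0 j : 0 < M (c j) setT.
Proof.
have [x xj] := set0Pn _ (X_neq0 j).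
have /andP[/parallel_setP pj _] := c_admissible j.
have /and3P[/eqP rx _ _] := pj x x xj xj.
by apply: leq_trans (rankS (M_matroid (c j)) (subsetT [set x])); rewrite rx.
Qed.

Lemma color_rank_gt1 j l : j != l -> c j = c l -> 1 < M (c j) setT.
Proof.
move=> jl cjl.
have disj : X j :&: X l == set0.
  apply: contraLR (eqxx (c l)) => meet; rewrite -{1}cjl.
  by apply: admissible_coloring_proper; rewrite /line_adj jl meet.
have [x xj] := set0Pn _ (X_neq0 j); have [y yl] := set0Pn _ (X_neq0 l).
have yNj : y \notin X j.
  by apply: contraTN disj => yj; apply/set0Pn; exists y; rewrite inE yj.
have xy : x != y by apply: contraNneq yNj => <-.
have /andP[/parallel_setP pj /forall_inP Fj] := c_admissible j.
have /andP[/parallel_setP pl _] := c_admissible l.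
have /and3P[/eqP rx _ _] := pj x x xj xj.
have /and3P[/eqP ry _ _] := pl y y yl yl.
rewrite ltnNge; apply/negP => M_le1.
have pxy : parallel (M (c j)) x y.
  have le := rankS (M_matroid (c j)) (subsetT [set x; y]).
  have ge := rankS (M_matroid (c j)) (subsetUl [set x] [set y]).
  rewrite /parallel rx cjl ry -cjl !eqxx /= eqn_leq (leq_trans le M_le1).
  exact: leq_trans (eq_leq (esym rx)) ge.
have [m [xm ym]] := parallel_hyperedge xy pxy.
have mj : m != j by apply: contraNneq yNj => <-.
have meet : X m :&: X j != set0 by apply/set0Pn; exists x; rewrite inE xm xj.
have cm : 1 < #|X m| by apply/card_gt1P; exists x, y.
by move: (Fj m); rewrite mj meet cm (parallel_set_hyperedge xm ym xy pxy) => /(_ isT).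
Qed.

End AdmissibleColoring.

Lemma decomposition_coloring : exists c : 'I_n -> 'I_k,
  proper_coloring X c /\ c1 c + 2 * c2plus c <= \sum_t M t setT.
Proof.
pose c j := xchoose (admissible_color_exists j).
have c_adm j : admissible_color j (c j) := xchooseP (admissible_color_exists j).
exists c; split; first exact: admissible_coloring_proper c_adm.
apply: c1_c2plus_le_sum => t.
  move/eqP/cards1P => [j /setP/(_ j)]; rewrite !inE eqxx => /eqP <-.
  by apply: (color_rank_gt0 c_adm j).
case/card_gt1P => j [l [+ + jl]]; rewrite !inE => /eqP <- /eqP cl.
by apply: (color_rank_gt1 c_adm jl (esym cl)).
Qed.

End Decomposition.
End Hypergraph.

Theorem corollary2p12 (E : finType) (n : nat) (X : 'I_n -> {set E}) (s : nat) :
  (forall i, X i != set0) ->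
  injective X ->
  (forall i j : 'I_n, i != j -> #|X i :&: X j| <= 1) ->
  ~ (exists a b c : E, [/\ a != b, a != c, b != c &
        [/\ exists i, X i = [set a; b], exists i, X i = [set a; c] &
            exists i, X i = [set b; c]]]) ->
  (forall A : {set E}, #|A| <= 4 -> hrho X A <= s) ->
  s < hrho X setT ->
  (forall k, decomposable (truncation (hrho X) s) k ->
     exists c : 'I_n -> 'I_k, proper_coloring X c /\ c1 c + 2 * c2plus c <= s) /\
  (s < chi_line X -> indecomposable (truncation (hrho X) s)).
Proof.
move=> X_neq0 X_inj X_meet_le1 X_triangle_free rho_small s_lt_rhoE.
have coloring k : decomposable (truncation (hrho X) s) k ->
    exists c : 'I_n -> 'I_k, proper_coloring X c /\ c1 c + 2 * c2plus c <= s.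
  case=> M [M_matroid M_trunc].
  have M_sum_small (A : {set E}) : #|A| <= 4 -> \sum_(i < k) M i A = hrho X A.
    by move=> A4; rewrite -M_trunc; apply/minn_idPl/rho_small.
  have -> : s = \sum_(i < k) M i setT by rewrite -M_trunc; apply/esym/minn_idPr/ltnW.
  by apply: (decomposition_coloring X_meet_le1 M_matroid M_sum_small X_triangle_free X_neq0 X_inj).
split=> // s_lt_chi k /coloring[c [c_proper c_count]].
have := leq_trans (chi_line_le_card_colors c_proper) (card_colors_le c).
lia.
Qed.
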